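(* For every $n\geq 1$ there is a computable sequence $\langle f_i : i\in\omega\rangle$ of colorings $f_i:[\omega]^n\to 2$ such that for every sequence $\langle H_i : i\in\omega\rangle$ in which each $H_i$ is an infinite set homogeneous for $f_i$, we have $\emptyset^{(n)}\leq_T \langle H_i : i\in\omega\rangle$.
   Context: $[\omega]^n$ denotes the set of $n$-element subsets of $\omega$; a set $H$ is homogeneous for $f:[\omega]^n\to 2$ if $f$ is constant on $[H]^n$. $\emptyset^{(n)}$ is the $n$-th Turing jump of the empty set. *)

From Stdlib Require Import Arith List Sorting.Sorted.
Import ListNotations.

Definition natset := nat -> Prop.

Definition pair (a b : nat) : nat := (a + b) * (a + b + 1) / 2 + a.

(** Programs: unary oracle mu-recursive functions (with pairing). *)
Inductive code : Type :=
| cZero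
| cSucc
| cId
| cFst
| cSnd
| cOracle
| cPair (f g : code)
| cComp (f g : code)
| cPrec (f g : code)
| cMin (f : code).

Inductive eval (A : natset) : code -> nat -> nat -> Prop :=
| ev_zero x : eval A cZero x 0
| ev_succ x : eval A cSucc x (S x)
| ev_id x : eval A cId x x
| ev_fst a b : eval A cFst (pair a b) a
| ev_snd a b : eval A cSnd (pair a b) b
| ev_oracle_in x : A x -> eval A cOracle x 1
| ev_oracle_out x : ~ A x -> eval A cOracle x 0
| ev_pair f g x u v : eval A f x u -> eval A g x v -> eval A (cPair f g) x (pair u v)
| ev_comp f g x u v : eval A g x u -> eval A f u v -> eval A (cComp f g) x v
| ev_prec0 f g x v : eval A f x v -> eval A (cPrec f g) (pair 0 x) v
| ev_precS f g y x u v :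
    eval A (cPrec f g) (pair y x) u -> eval A g (pair y (pair u x)) v ->
    eval A (cPrec f g) (pair (S y) x) v
| ev_min f x y :
    eval A f (pair y x) 0 ->
    (forall z, z < y -> exists v, v <> 0 /\ eval A f (pair z x) v) ->
    eval A (cMin f) x y.

Fixpoint godel (c : code) : nat :=
  match c with
  | cZero => pair 0 0
  | cSucc => pair 1 0
  | cId => pair 2 0
  | cFst => pair 3 0
  | cSnd => pair 4 0
  | cOracle => pair 5 0
  | cPair f g => pair 6 (pair (godel f) (godel g))
  | cComp f g => pair 7 (pair (godel f) (godel g))
  | cPrec f g => pair 8 (pair (godel f) (godel g))
  | cMin f => pair 9 (godel f)
  end.

Definition bool2nat (b : bool) : nat := if b then 1 else 0.

Definition Treducible (A B : natset) : Prop :=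
  exists c : code, forall x, (A x -> eval B c x 1) /\ (~ A x -> eval B c x 0).

Definition jump (A : natset) : natset :=
  fun e => exists c, godel c = e /\ exists y, eval A c e y.

Definition empty_set : natset := fun _ => False.

Definition iterated_jump (n : nat) : natset := Nat.iter n jump empty_set.

(** Finite strictly increasing lists code elements of [omega]^n. *)
Definition is_nsubset (n : nat) (s : list nat) : Prop :=
  length s = n /\ Sorted lt s.

Fixpoint code_list (s : list nat) : nat :=
  match s with
  | [] => 0
  | x :: s' => S (pair x (code_list s'))
  end.

(** A sequence of colorings f_i : [omega]^n -> 2 (f i s is the color of
    the n-set listed increasingly by s; values off [omega]^n are irrelevant). *)
Definition coloring_seq := nat -> list nat -> bool.

Definition computable_coloring_seq (n : nat) (f : coloring_seq) : Prop :=
  exists c : code, forall i s, is_nsubset n s ->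
    eval empty_set c (pair i (code_list s)) (bool2nat (f i s)).

Definition infinite_set (H : natset) : Prop :=
  forall m, exists x, m <= x /\ H x.

Definition homogeneous (n : nat) (g : list nat -> bool) (H : natset) : Prop :=
  exists b : bool, forall s, is_nsubset n s -> Forall H s -> g s = b.

Definition seq_join (H : nat -> natset) : natset :=
  fun z => exists i x, z = pair i x /\ H i x.

From Stdlib Require Import Arith Lia List ClassicalEpsilon.
Import ListNotations.
Open Scope bool_scope.

(** By the limit lemma the
  characteristic function of the jump A' is the limit, as s grows, of a
  function computable from the first s bits of A: run every program for s
  stages using the oracle prefix A|s.  Iterating, chi of emptyset^(k) is the
  k-fold iterated limit lim_{s1} ... lim_{sk} of one computable function
  [iterated_approx k e (s1, ..., sk)].  Colour an increasing k-tuple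
  s1 < ... < sk by f_e(s1, ..., sk) := iterated_approx k e (s1, ..., sk).
  If H is infinite and homogeneous for f_e, choosing every s_j inside H
  (possible in every limit) shows that the iterated limit, i.e.
  chi(e in emptyset^(k)), is the colour of H.  Given the join of the H_i one
  enumerates H_e increasingly and reads off that colour on its first k
  elements. *)

Lemma pair_S_l a b : pair (S a) b = S (pair a (S b)).
Proof. unfold pair. replace (S a + b) with (a + S b) by lia. lia. Qed.

Lemma pair_0_S a : pair 0 (S a) = S (pair a 0).
Proof.
  unfold pair. rewrite !Nat.add_0_r, !Nat.add_0_l.
  replace (S a * (S a + 1)) with (a * (a + 1) + (a + 1) * 2) by nia.
  rewrite Nat.div_add by lia. lia.
Qed.

(** [unpair] walks the diagonals of the Cantor enumeration; by the two
    equations above it is inverse to [pair]. *)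
Fixpoint unpair (z : nat) : nat * nat :=
  match z with
  | 0 => (0, 0)
  | S z' => match unpair z' with (a, 0) => (0, S a) | (a, S b) => (S a, b) end
  end.

Lemma pair_unpair z : pair (fst (unpair z)) (snd (unpair z)) = z.
Proof.
  induction z as [|z IH]; [reflexivity|]. simpl.
  destruct (unpair z) as [a [|b]]; simpl in *.
  - rewrite pair_0_S. congruence.
  - rewrite pair_S_l. congruence.
Qed.

Lemma unpair_pair a b : unpair (pair a b) = (a, b).
Proof.
  enough (H : forall s a b, a + b <= s -> unpair (pair a b) = (a, b)) by (apply (H (a + b)); lia).
  induction s as [|s IHs]; intros a0 b0 Hs.
  - replace a0 with 0 by lia. replace b0 with 0 by lia. reflexivity.
  - induction a0 as [|a0 IHa] in b0, Hs |- *.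
    + destruct b0 as [|c]; [reflexivity|].
      rewrite pair_0_S. simpl. rewrite IHs by lia. reflexivity.
    + rewrite pair_S_l. simpl. rewrite IHa by lia. reflexivity.
Qed.

Definition P1 (z : nat) : nat := fst (unpair z).
Definition P2 (z : nat) : nat := snd (unpair z).

Lemma P1_pair a b : P1 (pair a b) = a.
Proof. unfold P1. rewrite unpair_pair. reflexivity. Qed.
Lemma P2_pair a b : P2 (pair a b) = b.
Proof. unfold P2. rewrite unpair_pair. reflexivity. Qed.
Lemma pair_P z : pair (P1 z) (P2 z) = z.
Proof. apply pair_unpair. Qed.

Lemma pair_inj a b c d : pair a b = pair c d -> a = c /\ b = d.
Proof. intro H. split; [rewrite <- (P1_pair a b), <- (P1_pair c d) | rewrite <- (P2_pair a b), <- (P2_pair c d)]; congruence. Qed.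

Ltac simp_pair := repeat (rewrite ?P1_pair, ?P2_pair in *).

Lemma godel_inj c1 c2 : godel c1 = godel c2 -> c1 = c2.
Proof.
  revert c2. induction c1; intros c2 H; destruct c2; simpl in H;
    apply pair_inj in H; destruct H as [H1 H2]; try discriminate; auto;
    try (apply pair_inj in H2; destruct H2 as [H3 H4]); f_equal; auto.
Qed.

(** ** Functions computable relative to an oracle *)

Definition computable (A : natset) (F : nat -> nat) : Prop :=
  exists c, forall x, eval A c x (F x).

Fixpoint prim_rec (F G : nat -> nat) (y x : nat) : nat :=
  match y with 0 => F x | S y' => G (pair y' (pair (prim_rec F G y' x) x)) end.

(** Boolean-valued functions are computed through [bool2nat]; [ifz] is case
    analysis on zero. *)
Definition ifz (n a b : nat) : nat := match n with 0 => a | S _ => b end.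

Definition char_fn (A : natset) (q : nat) : nat :=
  if excluded_middle_informative (A q) then 1 else 0.

Section Closure.
Variable A : natset.

Lemma computable_ext F G : (forall x, F x = G x) -> computable A F -> computable A G.
Proof. intros H [c Hc]. exists c. intro x. rewrite <- H. auto. Qed.

Lemma c_zero : computable A (fun _ => 0).
Proof. exists cZero. constructor. Qed.
Lemma c_succ : computable A S.
Proof. exists cSucc. constructor. Qed.
Lemma c_id : computable A (fun x => x).
Proof. exists cId. constructor. Qed.
Lemma c_P1 : computable A P1.
Proof. exists cFst. intro x. rewrite <- (pair_P x) at 1. constructor. Qed.
Lemma c_P2 : computable A P2.
Proof. exists cSnd. intro x. rewrite <- (pair_P x) at 1. constructor. Qed.
Lemma c_char : computable A (char_fn A).
Proof.
  exists cOracle. intro x. unfold char_fn.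
  destruct (excluded_middle_informative (A x)); constructor; auto.
Qed.

Lemma c_pair F G : computable A F -> computable A G -> computable A (fun x => pair (F x) (G x)).
Proof. intros [f Hf] [g Hg]. exists (cPair f g). intro x. constructor; auto. Qed.
Lemma c_comp F G : computable A F -> computable A G -> computable A (fun x => F (G x)).
Proof. intros [f Hf] [g Hg]. exists (cComp f g). intro x. econstructor; eauto. Qed.
Lemma c_prim_rec2 F G : computable A F -> computable A G ->
  computable A (fun z => prim_rec F G (P1 z) (P2 z)).
Proof.
  intros [f Hf] [g Hg]. exists (cPrec f g). intro z.
  rewrite <- (pair_P z) at 1. generalize (P1 z) (P2 z). intros y x.
  induction y; simpl; econstructor; eauto.
Qed.

Lemma c_const n : computable A (fun _ => n).
Proof. induction n; [apply c_zero|]. apply (c_comp S (fun _ => n)); auto using c_succ. Qed.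

Lemma c_app2 H F G : computable A (fun z => H (P1 z) (P2 z)) -> computable A F -> computable A G ->
  computable A (fun x => H (F x) (G x)).
Proof.
  intros h f g. eapply computable_ext; [|apply (c_comp _ _ h (c_pair F G f g))].
  intro x. simpl. simp_pair. reflexivity.
Qed.
Lemma c_app3 H F G K : computable A (fun z => H (P1 z) (P1 (P2 z)) (P2 (P2 z))) ->
  computable A F -> computable A G -> computable A K -> computable A (fun x => H (F x) (G x) (K x)).
Proof.
  intros h hf hg hk.
  eapply computable_ext; [|apply (c_comp _ (fun x => pair (F x) (pair (G x) (K x))) h)].
  - intro x. simpl. simp_pair. reflexivity.
  - apply c_pair; auto. apply c_pair; auto.
Qed.
Lemma c_prim_rec F G Y X : computable A F -> computable A G -> computable A Y -> computable A X ->
  computable A (fun x => prim_rec F G (Y x) (X x)).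
Proof. intros. apply (c_app2 (prim_rec F G)); auto. apply c_prim_rec2; auto. Qed.

Lemma c2_pair : computable A (fun z => pair (P1 z) (P2 z)).
Proof. eapply computable_ext; [|apply c_id]. intro. simpl. rewrite pair_P. auto. Qed.
Lemma c_pred : computable A pred.
Proof.
  apply computable_ext with (F := fun y => prim_rec (fun _ => 0) P1 y 0).
  - intros [|y]; simpl; [auto|apply P1_pair].
  - apply c_prim_rec; auto using c_zero, c_P1, c_id, c_const.
Qed.

Lemma c2_add : computable A (fun z => P1 z + P2 z).
Proof.
  eapply computable_ext; [|apply (c_prim_rec2 (fun x => x) (fun w => S (P1 (P2 w))))].
  - intro z. simpl. generalize (P1 z) (P2 z); intros y x.
    induction y; simpl; simp_pair; auto.
  - apply c_id.
  - apply c_comp; [apply c_succ|]. apply c_comp; [apply c_P1|apply c_P2].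
Qed.
Lemma c2_subr : computable A (fun z => P2 z - P1 z).
Proof.
  eapply computable_ext; [|apply (c_prim_rec2 (fun x => x) (fun w => pred (P1 (P2 w))))].
  - intro z. simpl. generalize (P1 z) (P2 z); intros y x.
    induction y; simpl; simp_pair; lia.
  - apply c_id.
  - apply c_comp; [apply c_pred|]. apply c_comp; [apply c_P1|apply c_P2].
Qed.
Lemma c2_sub : computable A (fun z => P1 z - P2 z).
Proof.
  eapply computable_ext; [|apply (c_app2 (fun a b => b - a) P2 P1)]; auto using c2_subr, c_P1, c_P2.
Qed.
Lemma c2_mul : computable A (fun z => P1 z * P2 z).
Proof.
  eapply computable_ext; [|apply (c_prim_rec2 (fun _ => 0) (fun w => P1 (P2 w) + P2 (P2 w)))].
  - intro z. simpl. generalize (P1 z) (P2 z); intros y x.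
    induction y; simpl; simp_pair; lia.
  - apply c_zero.
  - apply (c_app2 Nat.add); auto using c2_add.
    + apply c_comp; [apply c_P1|apply c_P2].
    + apply c_comp; apply c_P2.
Qed.

Lemma c_ifz N U V : computable A N -> computable A U -> computable A V ->
  computable A (fun x => ifz (N x) (U x) (V x)).
Proof.
  intros hn hu hv.
  assert (h : computable A (fun z => prim_rec P1 (fun w => P2 (P2 (P2 w))) (P1 z) (P2 z))).
  { apply c_prim_rec2; [apply c_P1|]. apply c_comp; [apply c_P2|]. apply c_comp; apply c_P2. }
  eapply computable_ext; [|apply (c_app2 _ N (fun x => pair (U x) (V x)) h hn (c_pair U V hu hv))].
  intro x. simpl. destruct (N x); simpl; simp_pair; reflexivity.
Qed.
Lemma c_leb F G : computable A F -> computable A G -> computable A (fun x => bool2nat (F x <=? G x)).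
Proof.
  intros hf hg.
  eapply computable_ext; [|apply (c_ifz (fun x => F x - G x) (fun _ => 1) (fun _ => 0))].
  - intro x. simpl. destruct (F x <=? G x) eqn:E.
    + apply Nat.leb_le in E. replace (F x - G x) with 0 by lia. reflexivity.
    + apply Nat.leb_gt in E. destruct (F x - G x) eqn:E2; [lia|reflexivity].
  - apply (c_app2 Nat.sub); auto using c2_sub.
  - apply c_const.
  - apply c_const.
Qed.
Lemma c_ltb F G : computable A F -> computable A G -> computable A (fun x => bool2nat (F x <? G x)).
Proof. intros. apply (c_leb (fun x => S (F x)) G); auto. apply c_comp; auto using c_succ. Qed.
Lemma c_andb F G : computable A (fun x => bool2nat (F x)) -> computable A (fun x => bool2nat (G x)) ->
  computable A (fun x => bool2nat (F x && G x)).
Proof.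
  intros hf hg. eapply computable_ext; [|apply (c_app2 Nat.mul _ _ c2_mul hf hg)].
  intro x. cbv beta. destruct (F x), (G x); reflexivity.
Qed.
Lemma c_eqb F G : computable A F -> computable A G -> computable A (fun x => bool2nat (F x =? G x)).
Proof.
  intros hf hg.
  eapply computable_ext; [|apply (c_andb (fun x => F x <=? G x) (fun x => G x <=? F x))].
  - intro x. simpl. destruct (F x =? G x) eqn:E.
    + apply Nat.eqb_eq in E. rewrite E, Nat.leb_refl. reflexivity.
    + apply Nat.eqb_neq in E.
      destruct (F x <=? G x) eqn:E1, (G x <=? F x) eqn:E2; try reflexivity.
      apply Nat.leb_le in E1, E2. lia.
  - apply c_leb; auto.
  - apply c_leb; auto.
Qed.
Lemma c_if (B : nat -> bool) U V : computable A (fun x => bool2nat (B x)) ->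
  computable A U -> computable A V -> computable A (fun x => if B x then U x else V x).
Proof.
  intros hb hu hv. eapply computable_ext; [|apply (c_ifz _ V U hb hv hu)].
  intro x. cbv beta. destruct (B x); reflexivity.
Qed.

End Closure.

#[export] Hint Resolve c_succ c_P1 c_P2 c_pred c2_pair c2_add c2_sub c2_mul : computable.

(** Higher-order combinators (bounded search, coding of finite sequences) are
    added to the [computable] tactic below through this hook once proved. *)
Ltac computable_higher_order := fail.

Ltac computable := cbv beta;
  first [ solve [eassumption]
  | computable_higher_order
  | match goal with
    | |- computable _ (fun _ => ?c) => apply c_const
    | |- computable _ (fun x => x) => apply c_id
    | |- computable _ (fun x => if @?B x then @?U x else @?V x) => apply (c_if _ B U V); computable
    | |- computable _ (fun x => bool2nat (@?F x =? @?G x)) => apply (c_eqb _ F G); computable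
    | |- computable _ (fun x => bool2nat (@?F x <=? @?G x)) => apply (c_leb _ F G); computable
    | |- computable _ (fun x => bool2nat (@?F x <? @?G x)) => apply (c_ltb _ F G); computable
    | |- computable _ (fun x => bool2nat (@?F x && @?G x)) => apply (c_andb _ F G); computable
    | |- computable _ (fun x => bool2nat (?H (@?F x) (@?G x))) =>
        apply (c_app2 _ (fun a b => bool2nat (H a b)) F G);
        [solve [eassumption | eauto with computable] | computable | computable]
    | |- computable _ (fun x => ifz (@?N x) (@?U x) (@?V x)) => apply (c_ifz _ N U V); computable
    | |- computable _ (fun x => prim_rec ?F ?G (@?Y x) (@?X x)) =>
        apply (c_prim_rec _ F G Y X); computable
    | |- computable _ (fun x => ?H (@?F x) (@?G x) (@?K x)) =>
        apply (c_app3 _ H F G K); [solve [eauto with computable] | computable | computable | computable]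
    | |- computable _ (fun x => ?H (@?F x) (@?G x)) =>
        apply (c_app2 _ H F G); [solve [eauto with computable] | computable | computable]
    | |- computable _ (fun x => ?H (@?F x)) =>
        apply (c_comp _ H F); [solve [eauto with computable] | computable]
    end ].

Definition consn (h t : nat) : nat := S (pair h t).
Definition hdn (l : nat) : nat := ifz l 0 (P1 (pred l)).
Definition tln (l : nat) : nat := ifz l 0 (P2 (pred l)).

Lemma hd_cons h t : hdn (consn h t) = h.
Proof. unfold hdn, consn. simpl. apply P1_pair. Qed.
Lemma tl_cons h t : tln (consn h t) = t.
Proof. unfold tln, consn. simpl. apply P2_pair. Qed.

(** [nthn q l] is the q-th entry of the coded list l, and 0 past its end. *)
Definition tl_iter (q l : nat) : nat := prim_rec (fun l => l) (fun w => tln (P1 (P2 w))) q l.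
Definition nthn (q l : nat) : nat := hdn (tl_iter q l).

Lemma tl_iter_S q l : tl_iter (S q) l = tl_iter q (tln l).
Proof.
  assert (E : forall q l, tl_iter (S q) l = tln (tl_iter q l)).
  { intros. unfold tl_iter. simpl. simp_pair. reflexivity. }
  induction q; [rewrite E; reflexivity|]. rewrite E, IHq, <- E. reflexivity.
Qed.
Lemma tl_iter_0 q : tl_iter q 0 = 0.
Proof. induction q; [reflexivity|]. rewrite tl_iter_S. exact IHq. Qed.

Lemma nth_cons0 h t : nthn 0 (consn h t) = h.
Proof. apply hd_cons. Qed.
Lemma nth_consS q h t : nthn (S q) (consn h t) = nthn q t.
Proof. unfold nthn. rewrite tl_iter_S, tl_cons. reflexivity. Qed.
Lemma nth_0 q : nthn q 0 = 0.
Proof. unfold nthn. rewrite tl_iter_0. reflexivity. Qed.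

Lemma c2_nth A : computable A (fun z => nthn (P1 z) (P2 z)).
Proof. unfold nthn, tl_iter, hdn, tln. computable. Qed.
Lemma c_hd A : computable A hdn.
Proof. unfold hdn. computable. Qed.
Lemma c_tl A : computable A tln.
Proof. unfold tln. computable. Qed.
Lemma c2_cons A : computable A (fun z => consn (P1 z) (P2 z)).
Proof. unfold consn. computable. Qed.
#[export] Hint Resolve c2_nth c_hd c_tl c2_cons : computable.

(** [prefix_code F n] codes the list [F 0; ...; F (n-1)]; it is built from the
    back by [prefix_from], which codes [F (n-j); ...; F (n-1)]. *)
Fixpoint prefix_from (F : nat -> nat) (n j : nat) : nat :=
  match j with 0 => 0 | S j' => consn (F (n - S j')) (prefix_from F n j') end.
Definition prefix_code (F : nat -> nat) (n : nat) : nat := prefix_from F n n.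

Lemma prefix_from_code_list F n j : j <= n ->
  prefix_from F n j = code_list (map F (seq (n - j) j)).
Proof.
  induction j; intro Hj; simpl; auto. rewrite IHj by lia. unfold consn. simpl.
  replace (S (n - S j)) with (n - j) by lia. reflexivity.
Qed.
Lemma prefix_code_list F n : prefix_code F n = code_list (map F (seq 0 n)).
Proof. unfold prefix_code. rewrite prefix_from_code_list by lia. rewrite Nat.sub_diag. reflexivity. Qed.

Lemma nth_prefix_code F n q : nthn q (prefix_code F n) = if q <? n then F q else 0.
Proof.
  enough (H : forall j q, j <= n -> nthn q (prefix_from F n j) = if q <? j then F (n - j + q) else 0).
  { unfold prefix_code. rewrite H by lia. destruct (q <? n); auto. f_equal. lia. }
  induction j as [|j IH]; intros q' Hj; simpl.
  - apply nth_0.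
  - destruct q' as [|q'].
    + rewrite nth_cons0. simpl. f_equal. lia.
    + rewrite nth_consS, IH by lia. change (S q' <? S j) with (q' <? j).
      destruct (q' <? j); auto. f_equal. lia.
Qed.

Lemma prefix_code_ext F G n : (forall y, y < n -> F y = G y) -> prefix_code F n = prefix_code G n.
Proof.
  intro H. rewrite !prefix_code_list. f_equal. apply map_ext_in.
  intros y Hy. apply in_seq in Hy. apply H. lia.
Qed.

Lemma c_prefix_code A (F : nat -> nat -> nat) N :
  computable A (fun w => F (P1 w) (P2 w)) -> computable A N ->
  computable A (fun x => prefix_code (fun y => F y x) (N x)).
Proof.
  intros hf hn.
  apply computable_ext with (F := fun x => prim_rec (fun _ => 0)
    (fun w => consn (F (P1 (P2 (P2 w)) - S (P1 w)) (P2 (P2 (P2 w)))) (P1 (P2 w))) (N x) (pair (N x) x)).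
  - intro x. unfold prefix_code. generalize (N x). intro n. enough (E : forall j, prim_rec (fun _ => 0)
      (fun w => consn (F (P1 (P2 (P2 w)) - S (P1 w)) (P2 (P2 (P2 w)))) (P1 (P2 w))) j (pair n x)
      = prefix_from (fun y => F y x) n j) by apply E.
    induction j; simpl; auto. simp_pair. rewrite IHj. reflexivity.
  - computable.
Qed.

(** [bounded_min P b] is the least [y < b] with [P y], or [b] if there is none. *)
Fixpoint bounded_min (P : nat -> bool) (b : nat) : nat :=
  match b with
  | 0 => 0
  | S b' => let m := bounded_min P b' in
            if m <? b' then m else if P b' then b' else S b'
  end.

Lemma bounded_min_spec P b :
  bounded_min P b <= b /\ (bounded_min P b < b -> P (bounded_min P b) = true) /\
  (forall z, z < bounded_min P b -> P z = false).
Proof.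
  induction b as [|b [H1 [H2 H3]]]; simpl; [split; [lia|split; intros; lia]|].
  destruct (bounded_min P b <? b) eqn:E.
  - apply Nat.ltb_lt in E. split; [lia|split; auto].
  - apply Nat.ltb_ge in E. assert (bounded_min P b = b) by lia.
    destruct (P b) eqn:E2.
    + split; [lia|split; auto]. intros z Hz. apply H3. lia.
    + split; [lia|split; [intros; lia|]]. intros z Hz.
      destruct (Nat.eq_dec z b); [subst; auto|apply H3; lia].
Qed.

Lemma bounded_min_witness P b y : y < b -> P y = true -> (forall z, z < y -> P z = false) ->
  bounded_min P b = y.
Proof.
  intros Hy Py Pz. destruct (bounded_min_spec P b) as [B1 [B2 B3]].
  destruct (Nat.lt_total (bounded_min P b) y) as [Hl|[He|Hl]]; auto.
  - specialize (B2 ltac:(lia)). rewrite Pz in B2 by auto. discriminate.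
  - rewrite B3 in Py by auto. discriminate.
Qed.

Lemma c_bounded_min A (P : nat -> nat -> bool) B :
  computable A (fun w => bool2nat (P (P1 w) (P2 w))) -> computable A B ->
  computable A (fun x => bounded_min (fun y => P y x) (B x)).
Proof.
  intros hp hb.
  apply computable_ext with (F := fun x => prim_rec (fun _ => 0)
    (fun w => if P1 (P2 w) <? P1 w then P1 (P2 w)
              else if P (P1 w) (P2 (P2 w)) then P1 w else S (P1 w)) (B x) x).
  - intro x. generalize (B x). intro j. induction j; simpl; auto.
    simp_pair. rewrite IHj. reflexivity.
  - computable.
Qed.

Ltac computable_higher_order ::= match goal with
  | |- computable _ (fun x => bounded_min (fun y => @?P y x) (@?B x)) =>
      apply (c_bounded_min _ P B); computable
  | |- computable _ (fun x => prefix_code (fun y => @?F y x) (@?B x)) =>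
      apply (c_prefix_code _ F B); computable
  end.

Lemma c_unbounded_min A F : computable A F -> (forall x, exists y, F (pair y x) = 0) ->
  exists G, computable A G /\
    forall x, F (pair (G x) x) = 0 /\ forall z, z < G x -> F (pair z x) <> 0.
Proof.
  intros [c Hc] Hex.
  pose (bound := fun x => S (proj1_sig (constructive_indefinite_description _ (Hex x)))).
  pose (G := fun x => bounded_min (fun y => F (pair y x) =? 0) (bound x)).
  assert (HG : forall x, F (pair (G x) x) = 0 /\ forall z, z < G x -> F (pair z x) <> 0).
  { intro x. unfold G, bound. destruct (constructive_indefinite_description _ (Hex x)) as [y Hy]. simpl.
    destruct (bounded_min_spec (fun y => F (pair y x) =? 0) (S y)) as [B1 [B2 B3]].
    assert (bounded_min (fun y => F (pair y x) =? 0) (S y) <= y).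
    { destruct (Nat.le_gt_cases (bounded_min (fun y => F (pair y x) =? 0) (S y)) y); auto.
      specialize (B3 y ltac:(lia)). simpl in B3. rewrite Hy in B3. discriminate. }
    split.
    - apply Nat.eqb_eq. apply B2. lia.
    - intros z Hz. apply Nat.eqb_neq. apply B3. auto. }
  exists G. split; auto. exists (cMin c). intro x. destruct (HG x) as [H1 H2].
  constructor.
  - rewrite <- H1. auto.
  - intros z Hz. exists (F (pair z x)). split; auto.
Qed.

(** ** Stage-wise simulation of all programs *)

(** An oracle approximation [o] answers 2 ("in"), 1 ("out") or 0 ("unknown").
    [prefix_oracle s sigma] answers from the coded prefix [sigma] of a
    characteristic function on the arguments below [s]. *)
Definition prefix_oracle (s sigma q : nat) : nat := if q <? s then S (nthn q sigma) else 0.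

(** A table [L] codes a list of entries [pair flag res]: for an index [z],
    [code_flag L z = 1] records that [z] is the Goedel number of a program,
    and for [z = pair e x], [result L z = S y] records that program [e] on
    input [x] has been seen to halt with output [y] (0 means "not yet"). *)
Definition code_flag (L z : nat) : nat := P1 (nthn z L).
Definition result (L z : nat) : nat := P2 (nthn z L).

(** One step of recognising Goedel numbers, following the clauses of [godel]. *)
Definition code_step (L z : nat) : nat :=
  let tg := P1 z in let a := P2 z in
  if tg <=? 5 then bool2nat (a =? 0)
  else if tg <=? 8 then bool2nat ((code_flag L (P1 a) =? 1) && (code_flag L (P2 a) =? 1))
  else if tg =? 9 then bool2nat (code_flag L a =? 1) else 0.

(** One step of evaluation, following the clauses of [eval]: a result for
    [pair e x] is derived from results already in [L]; minimisation searches
    below the table size [b]. *)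
Definition result_step (o : nat -> nat) (b L z : nat) : nat :=
  let e := P1 z in let x := P2 z in let tg := P1 e in let a := P2 e in
  if tg =? 0 then (if a =? 0 then 1 else 0)
  else if tg =? 1 then (if a =? 0 then S (S x) else 0)
  else if tg =? 2 then (if a =? 0 then S x else 0)
  else if tg =? 3 then (if a =? 0 then S (P1 x) else 0)
  else if tg =? 4 then (if a =? 0 then S (P2 x) else 0)
  else if tg =? 5 then (if a =? 0 then (if o x <=? 2 then o x else 0) else 0)
  else if tg =? 6 then
     (if result L (pair (P1 a) x) =? 0 then 0 else if result L (pair (P2 a) x) =? 0 then 0
      else S (pair (pred (result L (pair (P1 a) x))) (pred (result L (pair (P2 a) x)))))
  else if tg =? 7 then
     (if result L (pair (P2 a) x) =? 0 then 0
      else result L (pair (P1 a) (pred (result L (pair (P2 a) x)))))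
  else if tg =? 8 then
     (if P1 x =? 0 then (if code_flag L (P2 a) =? 1 then result L (pair (P1 a) (P2 x)) else 0)
      else (if result L (pair e (pair (pred (P1 x)) (P2 x))) =? 0 then 0
            else result L (pair (P2 a) (pair (pred (P1 x))
                   (pair (pred (result L (pair e (pair (pred (P1 x)) (P2 x))))) (P2 x))))))
  else if tg =? 9 then
     (if bounded_min (fun y => result L (pair a (pair y x)) <=? 1) b <? b
      then (if result L (pair a (pair (bounded_min (fun y => result L (pair a (pair y x)) <=? 1) b) x)) =? 1
            then S (bounded_min (fun y => result L (pair a (pair y x)) <=? 1) b) else 0)
      else 0)
  else 0.

Fixpoint table (o : nat -> nat) (b k : nat) : nat :=
  match k with
  | 0 => 0
  | S k' => prefix_code (fun z => pair (code_step (table o b k') z) (result_step o b (table o b k') z)) b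
  end.

Lemma code_flag_S o b k z : z < b -> code_flag (table o b (S k)) z = code_step (table o b k) z.
Proof.
  intro H. unfold code_flag. simpl. rewrite nth_prefix_code.
  apply Nat.ltb_lt in H. rewrite H. apply P1_pair.
Qed.
Lemma result_S o b k z : z < b -> result (table o b (S k)) z = result_step o b (table o b k) z.
Proof.
  intro H. unfold result. simpl. rewrite nth_prefix_code.
  apply Nat.ltb_lt in H. rewrite H. apply P2_pair.
Qed.
Lemma table_out_of_range o b k z : b <= z -> nthn z (table o b k) = 0.
Proof.
  intro H. destruct k; simpl; [apply nth_0|]. rewrite nth_prefix_code.
  apply Nat.ltb_ge in H. rewrite H. reflexivity.
Qed.

Lemma c_table A S_ Sigma B K : computable A S_ -> computable A Sigma -> computable A B -> computable A K ->
  computable A (fun x => table (prefix_oracle (S_ x) (Sigma x)) (B x) (K x)).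
Proof.
  intros hs hsigma hb hk.
  apply computable_ext with (F := fun x => prim_rec (fun _ => 0)
     (fun w => prefix_code (fun z =>
        pair (code_step (P1 (P2 w)) z)
             (result_step (prefix_oracle (P1 (P2 (P2 w))) (P1 (P2 (P2 (P2 w)))))
                (P2 (P2 (P2 (P2 w)))) (P1 (P2 w)) z)) (P2 (P2 (P2 (P2 w)))))
     (K x) (pair (S_ x) (pair (Sigma x) (B x)))).
  - intro x. generalize (K x). intro k. induction k; simpl; auto.
    simp_pair. rewrite IHk. reflexivity.
  - apply c_prim_rec; [computable| |computable|computable].
    unfold code_step, result_step, prefix_oracle, code_flag, result. cbv zeta. computable.
Qed.

(** The stage-[s] guess at whether [e] is in the jump, from the coded prefix
    [sigma] of length [s] of the oracle: has [e] halted on input [e] within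
    the size-[s] table after [s] rounds? *)
Definition jump_approx (sigma s e : nat) : nat :=
  if result (table (prefix_oracle s sigma) s s) (pair e e) =? 0 then 0 else 1.

Lemma c_jump_approx A : computable A (fun w => jump_approx (P1 w) (P1 (P2 w)) (P2 (P2 w))).
Proof.
  assert (computable A (fun w => table (prefix_oracle (P1 (P2 w)) (P1 w)) (P1 (P2 w)) (P1 (P2 w))))
    by (apply (c_table A (fun w => P1 (P2 w)) (fun w => P1 w)); computable).
  unfold jump_approx, result. computable.
Qed.
#[export] Hint Resolve c_jump_approx : computable.

Definition oracle_sound (A : natset) (o : nat -> nat) : Prop :=
  forall q, (o q = 2 -> A q) /\ (o q = 1 -> ~ A q).

Lemma bool2nat_1 b : bool2nat b = 1 -> b = true.
Proof. destruct b; simpl; auto; discriminate. Qed.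

Lemma eval_fst A x : eval A cFst x (P1 x).
Proof. rewrite <- (pair_P x) at 1. constructor. Qed.
Lemma eval_snd A x : eval A cSnd x (P2 x).
Proof. rewrite <- (pair_P x) at 1. constructor. Qed.

Lemma code_flag_sound o b k z : code_flag (table o b k) z = 1 -> exists c, godel c = z.
Proof.
  revert z. induction k as [|k IH]; intros z H.
  { unfold code_flag in H. simpl in H. rewrite nth_0 in H. discriminate. }
  destruct (Nat.lt_ge_cases z b) as [Hz|Hz];
    [|unfold code_flag in H; rewrite table_out_of_range in H by auto; discriminate].
  rewrite code_flag_S in H by auto. unfold code_step in H. cbv zeta in H.
  rewrite <- (pair_P z). destruct (P1 z) as [|[|[|[|[|[|[|[|[|[|t]]]]]]]]]]; simpl in H;
    try discriminate;
    try (apply bool2nat_1, Nat.eqb_eq in H; rewrite H;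
         first [exists cZero; reflexivity | exists cSucc; reflexivity | exists cId; reflexivity
               | exists cFst; reflexivity | exists cSnd; reflexivity | exists cOracle; reflexivity]);
    [apply bool2nat_1, andb_prop in H; destruct H as [H1 H2]; apply Nat.eqb_eq in H1, H2;
     destruct (IH _ H1) as [c1 E1]; destruct (IH _ H2) as [c2 E2] ..|].
  - exists (cPair c1 c2). simpl. rewrite E1, E2, pair_P. reflexivity.
  - exists (cComp c1 c2). simpl. rewrite E1, E2, pair_P. reflexivity.
  - exists (cPrec c1 c2). simpl. rewrite E1, E2, pair_P. reflexivity.
  - apply bool2nat_1, Nat.eqb_eq in H. destruct (IH _ H) as [c1 E1].
    exists (cMin c1). simpl. rewrite E1. reflexivity.
Qed.

Section ResultStepSound.
Variables (A : natset) (o : nat -> nat) (b L : nat).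
Hypothesis oracle_ok : oracle_sound A o.
Hypothesis flags_ok : forall z, code_flag L z = 1 -> exists c, godel c = z.
Hypothesis results_ok : forall z y, result L z = S y -> exists c, godel c = P1 z /\ eval A c (P2 z) y.

Lemma results_ok_pair e x y : result L (pair e x) = S y -> exists c, godel c = e /\ eval A c x y.
Proof. intro H. destruct (results_ok _ _ H) as [c Hc]. simp_pair. eauto. Qed.

(** Primitive recursion: the base case also needs the step code [P2 a] to be
    a recorded program, since [cPrec f g] is only defined for programs [g]. *)
Lemma result_step_sound_prec a x y :
  result_step o b L (pair (pair 8 a) x) = S y -> exists c, godel c = pair 8 a /\ eval A c x y.
Proof.
  unfold result_step. cbv zeta. simp_pair. simpl. intro H.
  rewrite <- (pair_P x) in *. destruct (P1 x) as [|y']; simp_pair; simpl in H.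
  - destruct (code_flag L (P2 a) =? 1) eqn:E1; try discriminate.
    apply Nat.eqb_eq in E1. destruct (flags_ok _ E1) as [c2 G2].
    destruct (results_ok_pair _ _ _ H) as [c1 [G1 V1]].
    exists (cPrec c1 c2). simpl. rewrite G1, G2, pair_P. split; auto. constructor; auto.
  - destruct (result L (pair (pair 8 a) (pair y' (P2 x)))) as [|u] eqn:E1; simpl in H; try discriminate.
    destruct (results_ok_pair _ _ _ E1) as [c' [G' V']].
    destruct (results_ok_pair _ _ _ H) as [c2 [G2 V2]].
    destruct c'; simpl in G'; apply pair_inj in G'; destruct G' as [Htag Ha]; try discriminate.
    subst a. simp_pair. apply godel_inj in G2. subst c2.
    exists (cPrec c'1 c'2). split; [reflexivity|]. econstructor; eauto.
Qed.

(** Minimisation: the bounded search stops at the least [y] with a recorded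
    output 0 (entry 1), all smaller [z] having recorded nonzero outputs. *)
Lemma result_step_sound_min a x y :
  result_step o b L (pair (pair 9 a) x) = S y -> exists c, godel c = pair 9 a /\ eval A c x y.
Proof.
  unfold result_step. cbv zeta. simp_pair. simpl.
  set (P := fun y0 => result L (pair a (pair y0 x)) <=? 1).
  destruct (bounded_min_spec P b) as [_ [_ Hbelow]]. intro H.
  destruct (bounded_min P b <? b); try discriminate.
  destruct (result L (pair a (pair (bounded_min P b) x)) =? 1) eqn:E; try discriminate.
  injection H as <-. apply Nat.eqb_eq in E.
  destruct (results_ok_pair _ _ _ E) as [c1 [G1 V1]].
  exists (cMin c1). simpl. rewrite G1. split; auto. constructor; auto.
  intros z Hz. specialize (Hbelow _ Hz). unfold P in Hbelow. apply Nat.leb_gt in Hbelow.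
  destruct (result L (pair a (pair z x))) as [|[|v]] eqn:E3; try lia.
  destruct (results_ok_pair _ _ _ E3) as [c2 [G2 V2]]. rewrite <- G1 in G2.
  apply godel_inj in G2. subst. exists (S v). auto.
Qed.

Lemma result_step_sound z y :
  result_step o b L z = S y -> exists c, godel c = P1 z /\ eval A c (P2 z) y.
Proof.
  rewrite <- (pair_P z). simp_pair. generalize (P2 z) as x. rewrite <- (pair_P (P1 z)).
  generalize (P2 (P1 z)) as a. intros a x H.
  destruct (P1 (P1 z)) as [|[|[|[|[|[|[|[|[|[|t]]]]]]]]]];
    [..|apply result_step_sound_prec; auto|apply result_step_sound_min; auto|];
    unfold result_step in H; cbv zeta in H; simp_pair; simpl in H; try discriminate;
    try (destruct (a =? 0) eqn:Ea; try discriminate; apply Nat.eqb_eq in Ea; subst a).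
  - injection H as <-. exists cZero. split; [reflexivity|constructor].
  - injection H as <-. exists cSucc. split; [reflexivity|constructor].
  - injection H as <-. exists cId. split; [reflexivity|constructor].
  - injection H as <-. exists cFst. split; [reflexivity|apply eval_fst].
  - injection H as <-. exists cSnd. split; [reflexivity|apply eval_snd].
  - exists cOracle. split; [reflexivity|].
    destruct (o x <=? 2) eqn:E2; try discriminate. apply Nat.leb_le in E2.
    destruct (oracle_ok x) as [Hin Hout].
    destruct y as [|[|y]]; [| |lia].
    + apply ev_oracle_out, Hout. auto.
    + apply ev_oracle_in, Hin. auto.
  - destruct (result L (pair (P1 a) x)) as [|u1] eqn:E1; simpl in H; try discriminate.
    destruct (result L (pair (P2 a) x)) as [|u2] eqn:E2; simpl in H; try discriminate.
    injection H as <-.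
    destruct (results_ok_pair _ _ _ E1) as [c1 [G1 V1]].
    destruct (results_ok_pair _ _ _ E2) as [c2 [G2 V2]].
    exists (cPair c1 c2). simpl. rewrite G1, G2, pair_P. split; auto. constructor; auto.
  - destruct (result L (pair (P2 a) x)) as [|u] eqn:E1; simpl in H; try discriminate.
    destruct (results_ok_pair _ _ _ E1) as [c2 [G2 V2]].
    destruct (results_ok_pair _ _ _ H) as [c1 [G1 V1]].
    exists (cComp c1 c2). simpl. rewrite G1, G2, pair_P. split; auto. econstructor; eauto.
Qed.

End ResultStepSound.

Lemma table_sound A o b k z y : oracle_sound A o ->
  result (table o b k) z = S y -> exists c, godel c = P1 z /\ eval A c (P2 z) y.
Proof.
  intro Ho. revert z y. induction k as [|k IH]; intros z y H.
  { unfold result in H. simpl in H. rewrite nth_0 in H. discriminate. }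
  destruct (Nat.lt_ge_cases z b) as [Hz|Hz];
    [|unfold result in H; rewrite table_out_of_range in H by auto; discriminate].
  rewrite result_S in H by auto.
  apply (result_step_sound A o b (table o b k)); auto. intro. apply code_flag_sound.
Qed.

Definition oracle_correct_below (A : natset) (o : nat -> nat) (N : nat) : Prop :=
  forall q, q < N -> (A q -> o q = 2) /\ (~ A q -> o q = 1).

Lemma oracle_correct_below_mono A o N N' :
  oracle_correct_below A o N -> N' <= N -> oracle_correct_below A o N'.
Proof. intros H Hle q Hq. apply H. lia. Qed.

Ltac last_round :=
  let o := fresh "o" in let b := fresh "b" in let k := fresh "k" in
  let Hb := fresh "Hb" in let Hk := fresh "Hk" in
  intros o b k Hb Hk; destruct k as [|k]; [lia|];
  first [rewrite result_S by lia | rewrite code_flag_S by lia];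
  unfold result_step, code_step; cbv zeta; simpl godel; simp_pair; simpl.

Lemma code_flag_complete c :
  exists N, forall o b k, N <= b -> N <= k -> code_flag (table o b k) (godel c) = 1.
Proof.
  induction c as [| | | | | |c1 [N1 H1] c2 [N2 H2] |c1 [N1 H1] c2 [N2 H2] |c1 [N1 H1] c2 [N2 H2] |c1 [N1 H1]];
    [exists (S (godel cZero)) | exists (S (godel cSucc)) | exists (S (godel cId))
    | exists (S (godel cFst)) | exists (S (godel cSnd)) | exists (S (godel cOracle))
    | exists (S (N1 + N2 + godel (cPair c1 c2))) | exists (S (N1 + N2 + godel (cComp c1 c2)))
    | exists (S (N1 + N2 + godel (cPrec c1 c2))) | exists (S (N1 + godel (cMin c1)))];
    last_round; try reflexivity; rewrite ?H1, ?H2 by lia; reflexivity.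
Qed.

Definition eventually_computes (A : natset) (c : code) (x y : nat) : Prop :=
  exists N, forall o b k, N <= b -> N <= k -> oracle_correct_below A o N ->
    result (table o b k) (pair (godel c) x) = S y.

Lemma eventually_computes_below A f x y :
  (forall z, z < y -> exists v, v <> 0 /\ eventually_computes A f (pair z x) v) ->
  exists N, forall z, z < y -> exists v, v <> 0 /\ forall o b k, N <= b -> N <= k ->
    oracle_correct_below A o N -> result (table o b k) (pair (godel f) (pair z x)) = S v.
Proof.
  induction y as [|y IH]; intro H; [exists 0; intros; lia|].
  destruct IH as [N HN]; [intros; apply H; lia|].
  destruct (H y) as [v [hv [N' HN']]]; [lia|].
  exists (N + N'). intros z Hz. destruct (Nat.eq_dec z y).
  - subst. exists v. split; auto. intros. apply HN'; try lia.
    eapply oracle_correct_below_mono; eauto; lia.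
  - destruct (HN z) as [v' [hv' Hv']]; [lia|]. exists v'. split; auto. intros.
    apply Hv'; try lia. eapply oracle_correct_below_mono; eauto; lia.
Qed.

Ltac shrink_oracle := try lia; eapply oracle_correct_below_mono; eauto; lia.

Lemma eventually_computes_min A f x y :
  eventually_computes A f (pair y x) 0 ->
  (forall z, z < y -> exists v, v <> 0 /\ eventually_computes A f (pair z x) v) ->
  eventually_computes A (cMin f) x y.
Proof.
  intros [N1 H1] Hbelow. destruct (eventually_computes_below A f x y Hbelow) as [N2 H2].
  exists (S (N1 + N2 + y + pair (godel (cMin f)) x)). last_round. intro Ho.
  set (P := fun y0 => result (table o b k) (pair (godel f) (pair y0 x)) <=? 1).
  rewrite (bounded_min_witness P b y).
  - replace (y <? b) with true by (symmetry; apply Nat.ltb_lt; lia).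
    rewrite H1 by shrink_oracle. reflexivity.
  - lia.
  - unfold P. rewrite H1 by shrink_oracle. reflexivity.
  - intros z Hz. destruct (H2 z Hz) as [v [hv Hv]]. unfold P.
    rewrite Hv by shrink_oracle. apply Nat.leb_gt. lia.
Qed.

Lemma table_complete A : forall c x y, eval A c x y -> eventually_computes A c x y.
Proof.
  fix IH 4. intros c x y d. destruct d.
  6: exists (S (pair (godel cOracle) x + x)); last_round; intro Ho;
     rewrite (proj1 (Ho x ltac:(lia))); auto.
  6: exists (S (pair (godel cOracle) x + x)); last_round; intro Ho;
     rewrite (proj2 (Ho x ltac:(lia))); auto.
  1-5: match goal with |- eventually_computes _ ?c ?x _ => exists (S (pair (godel c) x)) end;
       last_round; reflexivity.
  - destruct (IH _ _ _ d1) as [N1 H1]. destruct (IH _ _ _ d2) as [N2 H2].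
    exists (S (N1 + N2 + pair (godel (cPair f g)) x)). last_round. intro Ho.
    rewrite H1, H2 by shrink_oracle. reflexivity.
  - destruct (IH _ _ _ d1) as [N1 H1]. destruct (IH _ _ _ d2) as [N2 H2].
    exists (S (N1 + N2 + pair (godel (cComp f g)) x)). last_round. intro Ho.
    rewrite H1 by shrink_oracle. simpl. rewrite H2 by shrink_oracle. reflexivity.
  - destruct (IH _ _ _ d) as [N1 H1]. destruct (code_flag_complete g) as [N2 H2].
    exists (S (N1 + N2 + pair (godel (cPrec f g)) (pair 0 x))). last_round. intro Ho.
    rewrite H2 by lia. simpl. rewrite H1 by shrink_oracle. reflexivity.
  - destruct (IH _ _ _ d1) as [N1 H1]. destruct (IH _ _ _ d2) as [N2 H2]. simpl godel in H1.
    exists (S (N1 + N2 + pair (godel (cPrec f g)) (pair (S y) x))). last_round. intro Ho.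
    rewrite H1 by shrink_oracle. simpl. rewrite H2 by shrink_oracle. reflexivity.
  - match goal with Hh : forall z, z < y -> _ |- _ => rename Hh into Hbelow end.
    apply eventually_computes_min; [exact (IH _ _ _ d)|].
    intros z hz. destruct (Hbelow z hz) as [v [hv ev]]. exists v. split; [exact hv|]. exact (IH _ _ _ ev).
Qed.

(** ** The limit lemma for the jump *)

Lemma prefix_oracle_char A s q :
  prefix_oracle s (prefix_code (char_fn A) s) q = if q <? s then S (char_fn A q) else 0.
Proof. unfold prefix_oracle. destruct (q <? s) eqn:E; auto. rewrite nth_prefix_code, E. reflexivity. Qed.

Lemma prefix_oracle_sound A s : oracle_sound A (prefix_oracle s (prefix_code (char_fn A) s)).
Proof.
  intro q. rewrite prefix_oracle_char. destruct (q <? s); [|split; discriminate].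
  unfold char_fn. destruct (excluded_middle_informative (A q)); split; congruence.
Qed.
Lemma prefix_oracle_correct A s : oracle_correct_below A (prefix_oracle s (prefix_code (char_fn A) s)) s.
Proof.
  intros q Hq. rewrite prefix_oracle_char. apply Nat.ltb_lt in Hq. rewrite Hq.
  unfold char_fn. destruct (excluded_middle_informative (A q)); tauto.
Qed.

(** The stage-[s] guess computed from the first [s] bits of [chi A]
    converges to [chi A'] (completeness gives convergence for members of the
    jump, soundness rules out false positives). *)
Lemma jump_limit A e :
  exists N, forall s, N <= s -> jump_approx (prefix_code (char_fn A) s) s e = char_fn (jump A) e.
Proof.
  unfold char_fn at 2. destruct (excluded_middle_informative (jump A e)) as [Hj|Hj].
  - destruct Hj as [c [<- [y Ev]]]. destruct (table_complete A c _ y Ev) as [N HN].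
    exists N. intros s Hs. unfold jump_approx. rewrite HN; auto.
    eapply oracle_correct_below_mono; [apply prefix_oracle_correct|auto].
  - exists 0. intros s _. unfold jump_approx.
    destruct (result _ _) as [|y] eqn:E; auto. exfalso. apply Hj.
    destruct (table_sound A _ s s _ y (prefix_oracle_sound A s) E) as [c [G V]].
    simp_pair. exists c. eauto.
Qed.

(** ** Iterated limits *)

Fixpoint iterated_limit (k : nat) (h : list nat -> nat) (v : nat) : Prop :=
  match k with
  | 0 => h [] = v
  | S k' => exists w : nat -> nat, (forall s, iterated_limit k' (fun l => h (s :: l)) (w s)) /\
             exists N, forall s, N <= s -> w s = v
  end.

Lemma iterated_limit_ext k h h' v :
  (forall l, h l = h' l) -> iterated_limit k h v -> iterated_limit k h' v.
Proof.
  revert h h' v. induction k; simpl; intros h h' v E H.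
  - rewrite <- E. auto.
  - destruct H as [w [H1 H2]]. exists w. split; auto. intro s. eapply IHk; [|apply H1]. intro. apply E.
Qed.

Lemma common_threshold (W : nat -> nat -> nat) v :
  (forall y, exists N, forall s', N <= s' -> W y s' = v y) ->
  forall s, exists N, forall s', N <= s' -> forall y, y < s -> W y s' = v y.
Proof.
  intros H s. induction s as [|s [N1 H1]]; [exists 0; intros; lia|].
  destruct (H s) as [N2 H2]. exists (N1 + N2). intros s' Hs y Hy.
  destruct (Nat.eq_dec y s); [subst; apply H2; lia|apply H1; lia].
Qed.

Lemma iterated_limit_prefix k : forall (h : nat -> list nat -> nat) v,
  (forall y, iterated_limit k (h y) (v y)) ->
  forall Phi s, iterated_limit k (fun l => Phi (prefix_code (fun y => h y l) s)) (Phi (prefix_code v s)).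
Proof.
  induction k; simpl; intros h v H Phi s.
  - f_equal. apply prefix_code_ext. auto.
  - pose (W := fun y => proj1_sig (constructive_indefinite_description _ (H y))).
    assert (HW : forall y, (forall s', iterated_limit k (fun l => h y (s' :: l)) (W y s')) /\
                           exists N, forall s', N <= s' -> W y s' = v y).
    { intro y. unfold W. destruct (constructive_indefinite_description _ (H y)) as [w Hw]. exact Hw. }
    exists (fun s' => Phi (prefix_code (fun y => W y s') s)). split.
    + intro s'. apply (IHk (fun y l => h y (s' :: l)) (fun y => W y s')). intro y. apply HW.
    + destruct (common_threshold W v (fun y => proj2 (HW y)) s) as [N HN]. exists N.
      intros s' Hs'. f_equal. apply prefix_code_ext. intros. apply HN; auto.
Qed.

(** [iterated_approx k e (s1, ..., sk)]: the stage-[s1] jump guess for [e],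
    computed from the first [s1] values of [iterated_approx (k-1) _ (s2, ..., sk)]. *)
Fixpoint iterated_approx (k e l : nat) : nat :=
  match k with
  | 0 => 0
  | S k' => jump_approx (prefix_code (fun y => iterated_approx k' y (tln l)) (hdn l)) (hdn l) e
  end.

Lemma iterated_approx_limit k e :
  iterated_limit k (fun l => iterated_approx k e (code_list l)) (char_fn (iterated_jump k) e).
Proof.
  revert e. induction k as [|k IH]; intro e.
  - simpl. unfold char_fn. destruct (excluded_middle_informative (empty_set e)) as [[]|]. reflexivity.
  - exists (fun s => jump_approx (prefix_code (char_fn (iterated_jump k)) s) s e). split.
    + intro s. eapply iterated_limit_ext;
        [|apply (iterated_limit_prefix k (fun y l => iterated_approx k y (code_list l)) _ IH
                  (fun sigma => jump_approx sigma s e) s)].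
      intro l. simpl. unfold hdn, tln. simpl. simp_pair. reflexivity.
    + apply jump_limit.
Qed.

Lemma iterated_approx_bool k e l : iterated_approx k e l = 0 \/ iterated_approx k e l = 1.
Proof. destruct k; simpl; auto. unfold jump_approx. destruct (_ =? 0); auto. Qed.

Lemma c_iterated_approx A k : computable A (fun w => iterated_approx k (P1 w) (P2 w)).
Proof.
  induction k; [exact (c_const A 0)|].
  apply computable_ext with (F := fun w =>
    jump_approx (prefix_code (fun y => iterated_approx k y (tln (P2 w))) (hdn (P2 w))) (hdn (P2 w)) (P1 w)).
  - reflexivity.
  - computable.
Qed.

(** ** Homogeneous sets decide iterated limits *)

(** If [h] is constant [c] on the increasing [k]-tuples from an infinite set
    [H], its iterated limit is [c]: choose every limit variable inside [H]. *)
Lemma iterated_limit_homogeneous k : forall h v, iterated_limit k h v ->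
  forall (H : natset) c, infinite_set H ->
  (forall l, is_nsubset k l -> Forall H l -> h l = c) -> v = c.
Proof.
  induction k; simpl; intros h v HL H c Hinf Hh.
  - rewrite <- HL. apply Hh; [split; auto|auto].
  - destruct HL as [w [H1 [N HN]]]. destruct (Hinf N) as [s [Hs Hs']].
    rewrite <- (HN s Hs). apply (IHk _ _ (H1 s) (fun x => H x /\ s < x)).
    + intro m. destruct (Hinf (S (m + s))) as [x [Hx Hx']]. exists x. split; [lia|split; auto; lia].
    + intros l [Hl1 Hl2] Hl3. apply Hh.
      * split; simpl; auto. constructor; auto. destruct l; constructor. inversion Hl3; subst. tauto.
      * constructor; auto. eapply Forall_impl; [|exact Hl3]. intros a [Ha _]; auto.
Qed.

Definition approx_coloring (k : nat) : coloring_seq :=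
  fun e s => iterated_approx k e (code_list s) =? 1.

Lemma homogeneous_color k e (H : natset) s :
  infinite_set H -> homogeneous k (approx_coloring k e) H -> is_nsubset k s -> Forall H s ->
  iterated_approx k e (code_list s) = char_fn (iterated_jump k) e.
Proof.
  intros Hinf [b Hb] Hs HsH.
  assert (Hc : forall l, is_nsubset k l -> Forall H l -> iterated_approx k e (code_list l) = bool2nat b).
  { intros l Hl HlH. specialize (Hb l Hl HlH). unfold approx_coloring in Hb.
    destruct (iterated_approx_bool k e (code_list l)) as [E|E]; rewrite E in *; subst b; reflexivity. }
  rewrite (iterated_limit_homogeneous k _ _ (iterated_approx_limit k e) H (bool2nat b) Hinf Hc).
  auto.
Qed.

Lemma approx_coloring_computable k : computable_coloring_seq k (approx_coloring k).
Proof.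
  destruct (c_iterated_approx empty_set k) as [c Hc]. exists c. intros i s _.
  specialize (Hc (pair i (code_list s))). simp_pair. unfold approx_coloring.
  destruct (iterated_approx_bool k i (code_list s)) as [E|E]; rewrite E in *; exact Hc.
Qed.

(** ** Enumerating the sets from their join *)

Lemma join_next_element (H : nat -> natset) : (forall i, infinite_set (H i)) ->
  exists G, computable (seq_join H) G /\ forall i m, m <= G (pair i m) /\ H i (G (pair i m)).
Proof.
  intro Hinf. set (J := seq_join H).
  set (F := fun w => if (P2 (P2 w) <=? P1 w) && (char_fn J (pair (P1 (P2 w)) (P1 w)) =? 1) then 0 else 1).
  assert (cF : computable J F) by (unfold F; pose proof (c_char J); computable).
  assert (HF : forall x, exists y, F (pair y x) = 0).
  { intro x. destruct (Hinf (P1 x) (P2 x)) as [y [Hy1 Hy2]]. exists y. unfold F. simp_pair.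
    apply Nat.leb_le in Hy1. rewrite Hy1. unfold char_fn.
    destruct (excluded_middle_informative (J (pair (P1 x) y))) as [_|Hn]; auto.
    exfalso. apply Hn. exists (P1 x), y. auto. }
  destruct (c_unbounded_min J F cF HF) as [G [cG HG]]. exists G. split; auto.
  intros i m. destruct (HG (pair i m)) as [H1 _]. unfold F in H1. simp_pair.
  destruct (m <=? G (pair i m)) eqn:E1; simpl in H1; [|discriminate].
  destruct (char_fn J (pair i (G (pair i m))) =? 1) eqn:E2; [|discriminate].
  apply Nat.leb_le in E1. split; auto. apply Nat.eqb_eq in E2. unfold char_fn in E2.
  destruct (excluded_middle_informative (J (pair i (G (pair i m))))) as [Hj|]; [|discriminate].
  destruct Hj as [i' [x' [Ep Hx]]]. apply pair_inj in Ep. destruct Ep; subst; auto.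
Qed.

Lemma join_enumerates (H : nat -> natset) : (forall i, infinite_set (H i)) ->
  exists E : nat -> nat -> nat, computable (seq_join H) (fun w => E (P1 w) (P2 w)) /\
    forall i j, H i (E i j) /\ E i j < E i (S j).
Proof.
  intro Hinf. destruct (join_next_element H Hinf) as [G [cG HG]].
  pose (E := fun i j => prim_rec (fun i => G (pair i 0)) (fun w => G (pair (P2 (P2 w)) (S (P1 (P2 w))))) j i).
  assert (ES : forall i j, E i (S j) = G (pair i (S (E i j)))).
  { intros. unfold E. simpl. simp_pair. reflexivity. }
  exists E. split; [unfold E; computable|].
  intros i j. rewrite ES. destruct (HG i (S (E i j))) as [Hle _]. split; [|lia].
  destruct j; [apply HG|]. rewrite ES. apply HG.
Qed.

Lemma increasing_prefix_nsubset (E : nat -> nat) n : (forall j, E j < E (S j)) ->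
  is_nsubset n (map E (seq 0 n)).
Proof.
  intro HE. split; [rewrite length_map, length_seq; reflexivity|].
  generalize 0. induction n; intro a; simpl; constructor; auto.
  destruct n; simpl; constructor. apply HE.
Qed.

Lemma computable_char_reducible A B : computable A (char_fn B) -> Treducible B A.
Proof.
  intros [c Hc]. exists c. intro x. specialize (Hc x). unfold char_fn in Hc.
  destruct (excluded_middle_informative (B x)); split; intro; try contradiction; exact Hc.
Qed.

(** The colourings [approx_coloring n] work (for [n = 0] as well). *)
Theorem lemma3p2 (n : nat) (hn : 1 <= n) :
  exists f : coloring_seq,
    computable_coloring_seq n f /\
    forall H : nat -> natset,
      (forall i, infinite_set (H i) /\ homogeneous n (f i) (H i)) ->
      Treducible (iterated_jump n) (seq_join H).
Proof.
  exists (approx_coloring n). split; [apply approx_coloring_computable|].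
  intros H HH.
  destruct (join_enumerates H (fun i => proj1 (HH i))) as [E [cE HE]].
  apply computable_char_reducible.
  apply computable_ext with (F := fun i => iterated_approx n i (prefix_code (fun j => E i j) n)).
  - intro i. rewrite prefix_code_list. destruct (HH i) as [Hinf Hhom].
    apply (homogeneous_color n i (H i)); auto.
    + apply increasing_prefix_nsubset. intro j. apply HE.
    + apply Forall_forall. intros x Hx. apply in_map_iff in Hx. destruct Hx as [j [<- _]]. apply HE.
  - pose proof (c_iterated_approx (seq_join H) n). computable.
Qed.
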